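(* Let $f,h$ be probability densities on $\mathbb{R}$ with finite second moments and the same first moment. Then for every $N\ge1$, \[ d_{GTW,N}(f^{\otimes N},h^{\otimes N})=d_{GTW,1}(f,h). \]
   Context: With $\hat f(\xi)=\int f(v)e^{-iv\cdot\xi}dv$, the Gabetta–Toscani–Wennberg distance on probability measures on $\mathbb{R}^k$ is $d_{GTW,k}(f,h)=\sup_{\xi\in\mathbb{R}^k\setminus\{0\}}|\hat f(\xi)-\hat h(\xi)|/|\xi|^2$. *)

From HB Require Import structures.
From mathcomp Require Import all_boot all_order all_algebra.
From mathcomp Require Import all_classical all_reals all_analysis.
Set Implicit Arguments. Unset Strict Implicit. Unset Printing Implicit Defensive.
Import Order.TTheory GRing.Theory Num.Theory.
Import numFieldNormedType.Exports.
Local Open Scope classical_set_scope.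
Local Open Scope ring_scope.

Section GTW.
Variable R : realType.
Local Notation mu := (@lebesgue_measure R).

Definition is_density (f : R -> R) : Prop :=
  measurable_fun setT f /\ (forall x, 0 <= f x) /\
  (\int[mu]_x (f x)%:E = 1)%E.

Definition finite_second_moment (f : R -> R) : Prop :=
  mu.-integrable setT (fun x => (x ^+ 2 * f x)%:E).

Definition first_moment (f : R -> R) : R := Rintegral mu setT (fun x => x * f x).

(** Points of R^k are represented by sequences of length k; a function on
    R^k is a function [seq R -> R] (only its values on sequences of length k
    matter).  Lebesgue integration over R^k is written as the iterated
    Lebesgue integral over the coordinates (Fubini). *)
Fixpoint int_Rn (k : nat) : (seq R -> R) -> R :=
  match k with
  | 0 => fun F => F [::]
  | k'.+1 => fun F => Rintegral mu setT (fun x => int_Rn k' (fun s => F (x :: s)))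
  end.

Definition dotR (u v : seq R) : R := \sum_(p <- zip u v) p.1 * p.2.

Definition sqnorm (v : seq R) : R := \sum_(x <- v) x ^+ 2.

(** Real and imaginary parts of \hat F (xi) = \int F(v) e^{-i v.xi} dv. *)
Definition fourier_re (k : nat) (F : seq R -> R) (xi : seq R) : R :=
  int_Rn k (fun v => F v * cos (dotR v xi)).
Definition fourier_im (k : nat) (F : seq R -> R) (xi : seq R) : R :=
  - int_Rn k (fun v => F v * sin (dotR v xi)).

Definition fourier_dist (k : nat) (F H : seq R -> R) (xi : seq R) : R :=
  Num.sqrt ((fourier_re k F xi - fourier_re k H xi) ^+ 2
          + (fourier_im k F xi - fourier_im k H xi) ^+ 2).

Definition dGTW (k : nat) (F H : seq R -> R) : \bar R :=
  ereal_sup [set (fourier_dist k F H xi / sqnorm xi)%:E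
            | xi in [set xi : seq R | size xi = k /\ has (fun x => x != 0) xi]].

Definition fourier1_re (f : R -> R) (xi : R) : R :=
  Rintegral mu setT (fun v => f v * cos (v * xi)).
Definition fourier1_im (f : R -> R) (xi : R) : R :=
  - Rintegral mu setT (fun v => f v * sin (v * xi)).
Definition dGTW1 (f h : R -> R) : \bar R :=
  ereal_sup [set (Num.sqrt ((fourier1_re f xi - fourier1_re h xi) ^+ 2
                      + (fourier1_im f xi - fourier1_im h xi) ^+ 2) / xi ^+ 2)%:E
            | xi in [set xi : R | xi != 0]].

Definition tensor_pow (f : R -> R) (v : seq R) : R := \prod_(x <- v) f x.

End GTW.

From mathcomp Require Import all_boot all_order all_algebra.
From mathcomp Require Import all_classical all_reals all_analysis.
From mathcomp Require Import complex ring measurable_realfun.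
Set Implicit Arguments. Unset Strict Implicit.
Import Order.TTheory GRing.Theory Num.Theory.
Import numFieldNormedType.Exports.
Local Open Scope classical_set_scope.
Local Open Scope ring_scope.

(** Let [phi] be the characteristic function of [f], so that the Fourier
    transform of [f^{\otimes N}] at [xi] is the conjugate of
    [\prod_i phi (xi_i)].  Since [|phi| <= 1], a telescoping argument gives
    [|\prod_i phi_f (xi_i) - \prod_i phi_h (xi_i)| <= \sum_i |phi_f (xi_i) - phi_h (xi_i)|],
    and each summand is at most [d_{GTW,1}(f,h) xi_i^2]; summing yields
    [d_{GTW,N} <= d_{GTW,1}].  Conversely, since [phi (0) = 1], testing
    [d_{GTW,N}] at [xi = (t, 0, ..., 0)] recovers the one-dimensional
    quotient at [t]. *)

Section complex_products.
Variable R : rcfType.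
Local Notation normc := (@Normc.normc R).

Lemma normc_ge0 (z : R[i]) : 0 <= normc z.
Proof. by case: z => a b; exact: sqrtr_ge0. Qed.

Lemma normc_prod_le1 (I : Type) (s : seq I) (p : I -> R[i]) :
  (forall i, normc (p i) <= 1) -> normc (\prod_(i <- s) p i) <= 1.
Proof.
move=> p_le1; elim: s => [|i s IHs]; first by rewrite big_nil Normc.normc1.
by rewrite big_cons Normc.normcM mulr_ile1 ?normc_ge0.
Qed.

Lemma normc_prodB_le (I : Type) (s : seq I) (p q : I -> R[i]) :
  (forall i, normc (p i) <= 1) -> (forall i, normc (q i) <= 1) ->
  normc (\prod_(i <- s) p i - \prod_(i <- s) q i) <= \sum_(i <- s) normc (p i - q i).
Proof.
move=> p_le1 q_le1; elim: s => [|i s IHs].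
  by rewrite !big_nil subrr Normc.normc0.
rewrite !big_cons.
have -> : p i * \prod_(j <- s) p j - q i * \prod_(j <- s) q j =
    p i * (\prod_(j <- s) p j - \prod_(j <- s) q j) + (p i - q i) * \prod_(j <- s) q j.
  by ring.
apply: le_trans (le_normcD _ _) _; rewrite !Normc.normcM addrC lerD //.
  by rewrite -[leRHS]mulr1 ler_wpM2l ?normc_ge0 ?normc_prod_le1.
by apply: le_trans IHs; rewrite -[leRHS]mul1r ler_wpM2r ?normc_ge0.
Qed.

End complex_products.

Lemma ler_sqrt_sumsqr (R : rcfType) (c s u v : R) : u ^+ 2 + v ^+ 2 = 1 ->
  c * u + s * v <= Num.sqrt (c ^+ 2 + s ^+ 2).
Proof.
move=> uv1; have [le0|ge0] := leP (c * u + s * v) 0.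
  exact: le_trans le0 (sqrtr_ge0 _).
rewrite -[leLHS](ger0_norm (ltW ge0)) -sqrtr_sqr ler_sqrt ?addr_ge0 ?sqr_ge0 //.
rewrite -subr_ge0 -[c ^+ 2 + _]mulr1 -uv1.
have -> : (c ^+ 2 + s ^+ 2) * (u ^+ 2 + v ^+ 2) - (c * u + s * v) ^+ 2 =
    (c * v - s * u) ^+ 2 by ring.
exact: sqr_ge0.
Qed.

Section characteristic_function.
Variable R : realType.
Local Notation mu := (@lebesgue_measure R).
Variable f : R -> R.
Hypothesis density_f : is_density f.

Lemma integrable_density : mu.-integrable setT (EFin \o f).
Proof.
case: density_f => mf [f_ge0 int_f]; apply/integrableP; split.
  exact/measurable_EFinP.
by under eq_integral do rewrite /= ger0_norm ?f_ge0 //; rewrite int_f ltry.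
Qed.

Lemma Rintegral_density : Rintegral mu setT f = 1.
Proof. by case: density_f => _ [_ int_f]; rewrite /Rintegral int_f. Qed.

Lemma integrableZ_real (k : R) (g : R -> R) : mu.-integrable setT (EFin \o g) ->
  mu.-integrable setT (EFin \o (fun x => k * g x)).
Proof. by move=> ig; apply: eq_integrable (integrableZl measurableT k ig). Qed.

Lemma integrable_density_mulr (g : R -> R) :
  measurable_fun setT g -> (forall x, `|g x| <= 1) ->
  mu.-integrable setT (EFin \o (fun x => f x * g x)).
Proof.
move=> mg g_le1; have g_bounded : [bounded g x | x in setT].
  exists 1; split; first by rewrite realE ler01.
  by move=> M M_gt1 x _; apply: le_trans (g_le1 x) (ltW M_gt1).
exact: eq_integrable (integrableMl measurableT integrable_density mg g_bounded).
Qed.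

Lemma measurable_fun_mulr_comp (F : R -> R) (t : R) : continuous F ->
  measurable_fun setT (fun x : R => F (x * t)).
Proof.
move=> cF; apply: continuous_measurable_fun => x.
exact: continuous_comp (@mulrr_continuous _ t x) (cF _).
Qed.

Lemma integrable_density_cos t : mu.-integrable setT (EFin \o (fun x => f x * cos (x * t))).
Proof.
apply: integrable_density_mulr => [|x]; last exact: cos_max.
exact: measurable_fun_mulr_comp (@continuous_cos R).
Qed.

Lemma integrable_density_sin t : mu.-integrable setT (EFin \o (fun x => f x * sin (x * t))).
Proof.
apply: integrable_density_mulr => [|x]; last exact: sin_max.
exact: measurable_fun_mulr_comp (@continuous_sin R).
Qed.

Definition charfun (t : R) : R[i] :=
  (Rintegral mu setT (fun x => f x * cos (x * t)) +i*
   Rintegral mu setT (fun x => f x * sin (x * t)))%C.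

Definition charfun_prod (xi : seq R) : R[i] := \prod_(t <- xi) charfun t.

Lemma charfun0 : charfun 0 = 1.
Proof.
rewrite /charfun; under eq_Rintegral do rewrite mulr0 cos0 mulr1.
under [X in (_ +i* X)%C]eq_Rintegral do rewrite mulr0 sin0 mulr0.
by rewrite Rintegral_density Rintegral_cst // mul0r.
Qed.

Lemma charfun_prod_nseq0 n : charfun_prod (nseq n 0) = 1.
Proof. by rewrite /charfun_prod big1_seq // => t /andP[_ /nseqP[-> _]]; exact: charfun0. Qed.

Lemma normc_charfun_le1 t : Normc.normc (charfun t) <= 1.
Proof.
rewrite /charfun /=; set c := Rintegral _ _ _; set s := Rintegral _ _ _.
set r := Num.sqrt _; have r_ge0 : 0 <= r by exact: sqrtr_ge0.
have cs_ge0 : 0 <= c ^+ 2 + s ^+ 2 by rewrite addr_ge0 ?sqr_ge0.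
(* [c^2 + s^2 = \int f (c cos + s sin) <= \int f r = r] by Cauchy-Schwarz. *)
have sqr_le : r ^+ 2 <= r.
  have int_c := integrableZ_real c (integrable_density_cos t).
  have int_s := integrableZ_real s (integrable_density_sin t).
  rewrite sqr_sqrtr // !expr2 {2}/c {2}/s.
  rewrite -(RintegralZl c measurableT (integrable_density_cos t)).
  rewrite -(RintegralZl s measurableT (integrable_density_sin t)).
  rewrite -(RintegralD measurableT int_c int_s) -[leRHS]mulr1 -Rintegral_density.
  rewrite -(RintegralZl r measurableT integrable_density).
  apply: le_Rintegral => //; first exact: (integrableD measurableT int_c int_s).
    exact: integrableZ_real integrable_density.
  move=> x _; case: density_f => _ [f_ge0 _].
  have -> : c * (f x * cos (x * t)) + s * (f x * sin (x * t)) =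
    f x * (c * cos (x * t) + s * sin (x * t)) by ring.
  by rewrite [r * _]mulrC ler_wpM2l // ler_sqrt_sumsqr // cos2Dsin2.
have [->|r_neq0] := eqVneq r 0; first exact: ler01.
have r_gt0 : 0 < r by rewrite lt_def r_neq0.
by rewrite -(ler_pM2l r_gt0) mulr1 -expr2.
Qed.

Lemma int_Rn_tensor_pow_cosD (xi : seq R) (a th : R) :
  int_Rn (size xi) (fun v => a * tensor_pow f v * cos (dotR v xi + th)) =
  a * (cos th * complex.Re (charfun_prod xi) - sin th * complex.Im (charfun_prod xi)).
Proof.
elim: xi a th => [|t xi IHxi] a th.
  by rewrite /= /tensor_pow /dotR /charfun_prod !big_nil /= add0r; ring.
rewrite /= /charfun_prod big_cons -/(charfun_prod xi).
case E : (charfun_prod xi) IHxi => [A B] IHxi /=.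
have inner x : int_Rn (size xi)
    (fun s => a * tensor_pow f (x :: s) * cos (dotR (x :: s) (t :: xi) + th)) =
    (a * (cos th * A - sin th * B)) * (f x * cos (x * t)) +
    (a * (- sin th * A - cos th * B)) * (f x * sin (x * t)).
  transitivity (int_Rn (size xi)
      (fun s => a * f x * tensor_pow f s * cos (dotR s xi + (x * t + th)))).
    congr int_Rn; apply: funext => s; rewrite /tensor_pow /dotR /= !big_cons /=.
    by congr (_ * cos _); ring.
  by rewrite IHxi /= cosD sinD; ring.
under eq_Rintegral do rewrite inner.
rewrite RintegralD //; last 2 first.
- exact/integrableZ_real/integrable_density_cos.
- exact/integrableZ_real/integrable_density_sin.
rewrite RintegralZl //; last exact: integrable_density_cos.
rewrite RintegralZl //; last exact: integrable_density_sin.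
by rewrite /charfun /=; ring.
Qed.

Lemma fourier_re_tensor_pow (xi : seq R) :
  fourier_re (size xi) (tensor_pow f) xi = complex.Re (charfun_prod xi).
Proof.
have := int_Rn_tensor_pow_cosD xi 1 0.
rewrite cos0 sin0 mul0r subr0 !mul1r => <-.
by congr int_Rn; apply: funext => v; rewrite addr0 mul1r.
Qed.

Lemma fourier_im_tensor_pow (xi : seq R) :
  fourier_im (size xi) (tensor_pow f) xi = - complex.Im (charfun_prod xi).
Proof.
have := int_Rn_tensor_pow_cosD xi 1 (- (pi / 2)).
rewrite cosN sinN cos_pihalf sin_pihalf mul0r sub0r mul1r mulN1r opprK => <-.
by congr (- int_Rn _ _); apply: funext => v; rewrite mul1r cosBpihalf.
Qed.

End characteristic_function.

Section GTW_distance.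
Variable R : realType.
Local Notation normc := (@Normc.normc R).
Variables f h : R -> R.
Hypotheses (density_f : is_density f) (density_h : is_density h).

Lemma fourier1_dist_charfun t :
  Num.sqrt ((fourier1_re f t - fourier1_re h t) ^+ 2
          + (fourier1_im f t - fourier1_im h t) ^+ 2) = normc (charfun f t - charfun h t).
Proof. by rewrite /fourier1_im /fourier1_re /=; congr Num.sqrt; ring. Qed.

Lemma fourier_dist_tensor_pow (xi : seq R) :
  fourier_dist (size xi) (tensor_pow f) (tensor_pow h) xi =
  normc (charfun_prod f xi - charfun_prod h xi).
Proof.
rewrite /fourier_dist !fourier_re_tensor_pow // !fourier_im_tensor_pow //.
by case: (charfun_prod f xi) (charfun_prod h xi) => [a b] [c d] /=; congr Num.sqrt; ring.
Qed.

Lemma sqnorm_gt0 (xi : seq R) : has (fun x => x != 0) xi -> 0 < sqnorm xi.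
Proof.
rewrite /sqnorm; elim: xi => [//|x xi IHxi] /= /orP[x_neq0|xi_neq0]; rewrite big_cons.
  rewrite ltr_pwDl ?exprn_even_gt0 ?x_neq0 //.
  by rewrite sumr_ge0 // => y _; exact: sqr_ge0.
by rewrite ltr_wpDl ?sqr_ge0 ?IHxi.
Qed.

Lemma dGTW1_ubound t : t != 0 ->
  ((normc (charfun f t - charfun h t) / t ^+ 2)%:E <= dGTW1 f h)%E.
Proof. by move=> t_neq0; apply: ereal_sup_ubound; exists t; rewrite ?fourier1_dist_charfun. Qed.

Lemma normc_charfunB_le (r : R) : dGTW1 f h = r%:E ->
  forall t, normc (charfun f t - charfun h t) <= r * t ^+ 2.
Proof.
move=> dGTW1_r t; have [->|t_neq0] := eqVneq t 0.
  by rewrite !charfun0 // subrr Normc.normc0 expr0n mulr0.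
have := dGTW1_ubound t_neq0; rewrite dGTW1_r lee_fin ler_pdivrMr //.
by rewrite exprn_even_gt0 //= ?t_neq0.
Qed.

Lemma dGTW_le_dGTW1 N : (dGTW N (tensor_pow f) (tensor_pow h) <= dGTW1 f h)%E.
Proof.
apply: ge_ereal_sup => _ [xi [<- xi_neq0] <-].
case E : (dGTW1 f h) => [r| |]; [|exact: leey|].
- rewrite lee_fin fourier_dist_tensor_pow ler_pdivrMr ?sqnorm_gt0 //.
  apply: le_trans (normc_prodB_le _ (normc_charfun_le1 density_f)
                                    (normc_charfun_le1 density_h)) _.
  rewrite /sqnorm big_distrr /=; apply: ler_sum => t _.
  exact: normc_charfunB_le.
- by have := dGTW1_ubound (oner_neq0 R); rewrite E.
Qed.

Lemma dGTW1_le_dGTW N : (1 <= N)%N ->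
  (dGTW1 f h <= dGTW N (tensor_pow f) (tensor_pow h))%E.
Proof.
move=> N_ge1; apply: ereal_sup_le => _ [t t_neq0 <-].
have size_xi : size (t :: nseq N.-1 0) = N by rewrite /= size_nseq prednK.
exists (t :: nseq N.-1 0); first by rewrite /= t_neq0.
rewrite -[X in fourier_dist X]size_xi fourier_dist_tensor_pow.
rewrite /charfun_prod !big_cons -!/(charfun_prod _ _) !charfun_prod_nseq0 // !mulr1.
rewrite fourier1_dist_charfun /sqnorm big_cons big1_seq ?addr0 //.
by move=> x /andP[_ /nseqP[-> _]]; rewrite expr0n.
Qed.

End GTW_distance.

(* The moment hypotheses only make [dGTW1 f h] finite; the identity holds in [\bar R] without them. *)
Theorem lemma7 (R : realType) (f h : R -> R) (N : nat) :
  is_density f -> is_density h ->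
  finite_second_moment f -> finite_second_moment h ->
  first_moment f = first_moment h ->
  (1 <= N)%N ->
  dGTW N (tensor_pow f) (tensor_pow h) = dGTW1 f h.
Proof.
move=> density_f density_h _ _ _ N_ge1; apply/eqP; rewrite eq_le.
by rewrite dGTW_le_dGTW1 // dGTW1_le_dGTW.
Qed.
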